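(* A category $C$ is Möbius if and only if the following three conditions hold: (1) $\mathrm{PD}_2f$ is finite for every morphism $f$; (2) no identity morphism admits a proper decomposition of length $n\ge2$; (3) if a morphism $f$ fixes some morphism $g$ (i.e. $fg=g$ or $gf=g$), then $f$ is an identity morphism.
   Context: For a morphism $f$ and $n\ge1$, an $n$-decomposition of $f$ is a tuple $(f_1,\dots,f_n)$ of composable morphisms with $f_n\cdots f_1=f$; $\mathrm{D}_nf$ is the set of them. For $n\ge2$, $\mathrm{PD}_nf$ is the set of proper $n$-decompositions (none of the $f_i$ is an identity); $\mathrm{PD}_1f=\{f\}$ and $\mathrm{PD}f=\bigsqcup_{n\ge1}\mathrm{PD}_nf$. A category is Möbius if $\mathrm{PD}f$ is finite for every morphism $f$. *)

From Stdlib Require Import List Arith.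
Import ListNotations.

Record Category : Type := {
  Ob : Type;
  Hom : Ob -> Ob -> Type;
  idm : forall a : Ob, Hom a a;
  comp : forall a b c : Ob, Hom b c -> Hom a b -> Hom a c;
  comp_id_l : forall a b (f : Hom a b), comp a b b (idm b) f = f;
  comp_id_r : forall a b (f : Hom a b), comp a a b f (idm a) = f;
  comp_assoc : forall a b c d (h : Hom c d) (g : Hom b c) (f : Hom a b),
      comp a c d h (comp a b c g f) = comp a b d (comp b c d h g) f
}.

Arguments idm {_} a.
Arguments comp {_ _ _ _} _ _.

Definition is_identity {C : Category} {x y : Ob C} (f : Hom C x y) : Prop :=
  existT (fun p : Ob C * Ob C => Hom C (fst p) (snd p)) (x, y) f
  = existT (fun p : Ob C * Ob C => Hom C (fst p) (snd p)) (x, x) (idm x).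

(* A chain of composable morphisms from a to b, written last-first:
   pcons f_n (... (pcons f_1 pnil)) represents the tuple (f_1, ..., f_n). *)
Inductive chain {C : Category} (a : Ob C) : Ob C -> Type :=
| pnil : chain a a
| pcons : forall b c : Ob C, Hom C b c -> chain a b -> chain a c.

Arguments pnil {C a}.
Arguments pcons {C a b c} _ _.

Fixpoint clength {C : Category} {a b : Ob C} (p : chain a b) : nat :=
  match p with
  | pnil => 0
  | pcons _ q => S (clength q)
  end.

Fixpoint ccomp {C : Category} {a b : Ob C} (p : chain a b) : Hom C a b :=
  match p with
  | pnil => idm a
  | pcons g q => comp g (ccomp q)
  end.

Fixpoint all_nonidentity {C : Category} {a b : Ob C} (p : chain a b) : Prop :=
  match p with
  | pnil => True
  | pcons g q => ~ is_identity g /\ all_nonidentity q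
  end.

Definition in_D {C : Category} {a b : Ob C} (n : nat) (f : Hom C a b)
  (p : chain a b) : Prop :=
  clength p = n /\ ccomp p = f.

(* PD_n f : for n >= 2 proper decompositions; PD_1 f = {f}; PD_0 empty *)
Definition in_PDn {C : Category} {a b : Ob C} (n : nat) (f : Hom C a b)
  (p : chain a b) : Prop :=
  1 <= n /\ in_D n f p /\ (n = 1 \/ all_nonidentity p).

Definition in_PD {C : Category} {a b : Ob C} (f : Hom C a b)
  (p : chain a b) : Prop :=
  exists n, in_PDn n f p.

Definition finite_set {T : Type} (P : T -> Prop) : Prop :=
  exists l : list T, forall x, P x -> In x l.

Definition Moebius (C : Category) : Prop :=
  forall (a b : Ob C) (f : Hom C a b), finite_set (in_PD f).

From Stdlib Require Import List Arith.
From Stdlib Require Import Lia Classical Eqdep.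
Import ListNotations.

(* In a Möbius category the lengths of the proper
   decompositions of a fixed f are bounded, so it suffices to exhibit
   proper decompositions of unbounded length whenever a condition fails:
   powers p ++ p ++ ... ++ p of a proper decomposition p of an identity,
   and (f, ..., f, g) resp. (g, f, ..., f) when f fixes g.

   Sufficiency (using only (1)-(3)).  Cutting a proper decomposition
   (f_1, ..., f_n) of f between f_i and f_(i+1) gives n - 1 elements of
   PD_2 f; by (2) both pieces are non-identities, and by (3) the cuts are
   pairwise distinct, since their lower pieces f_i ... f_1 differ.  Hence
   n <= 1 + |PD_2 f|.  Moreover each PD_n f is finite by induction on n,
   because a proper (n+1)-decomposition is determined by its top cut, an
   element of PD_2 f, together with a proper n-decomposition of the lower
   piece.  So PD f is a finite union of finite sets. *)

Section Finiteness.
Variable T : Type.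

Lemma finite_set_bounded (P : T -> Prop) (mu : T -> nat) :
  finite_set P -> exists N, forall x, P x -> mu x <= N.
Proof.
  intros [l Hl]. exists (fold_right (fun y acc => max (mu y) acc) 0 l).
  intros x Hx. specialize (Hl x Hx). clear Hx.
  induction l as [|y l IH]; simpl in *; [contradiction|].
  destruct Hl as [<-|Hl]; [lia|]. specialize (IH Hl). lia.
Qed.

Lemma finite_set_cover {I : Type} (L : list I) (R : I -> T -> Prop)
  (P : T -> Prop) :
  (forall i, finite_set (R i)) ->
  (forall x, P x -> exists i, In i L /\ R i x) -> finite_set P.
Proof.
  intros HR.
  assert (Hunion : exists l, forall x i, In i L -> R i x -> In x l).
  { induction L as [|i L' [l' Hl']].
    - exists []. intros x i [].
    - destruct (HR i) as [li Hli]. exists (li ++ l').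
      intros x j [<-|Hj] Hx; apply in_or_app; [left|right]; eauto. }
  destruct Hunion as [l Hl]. intro Hcov. exists l.
  intros x Hx. destruct (Hcov x Hx) as [i [Hi Hix]]. eauto.
Qed.

End Finiteness.

Section Chains.
Variable C : Category.

Lemma is_identity_ind (P : forall x y : Ob C, Hom C x y -> Prop) :
  (forall x, P x x (idm x)) ->
  forall x y (f : Hom C x y), is_identity f -> P x y f.
Proof.
  intros Hid x y f E.
  pose (Q := fun u : {p : Ob C * Ob C & Hom C (fst p) (snd p)} =>
               P (fst (projT1 u)) (snd (projT1 u)) (projT2 u)).
  change (Q (existT _ (x, y) f)). rewrite E. exact (Hid x).
Qed.

Lemma chain_S {a b : Ob C} (p : chain a b) n :
  clength p = S n ->
  exists k (g : Hom C k b) (q : chain a k), p = pcons g q /\ clength q = n.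
Proof. destruct p; simpl; intro H; [discriminate|]. injection H; eauto. Qed.

Lemma proper_in_PDn {a b : Ob C} (p : chain a b) :
  1 <= clength p -> all_nonidentity p -> in_PDn (clength p) (ccomp p) p.
Proof. intros Hl Hp. repeat split; auto. Qed.

(* Concatenation: capp t s is the chain (s_1, ..., s_k, t_1, ..., t_l). *)
Fixpoint capp {a m b : Ob C} (t : chain m b) (s : chain a m) : chain a b :=
  match t in chain _ b0 return chain a b0 with
  | pnil => s
  | pcons g t' => pcons g (capp t' s)
  end.

Lemma clength_capp {a m b : Ob C} (t : chain m b) (s : chain a m) :
  clength (capp t s) = clength t + clength s.
Proof. induction t; simpl; auto. Qed.

Lemma ccomp_capp {a m b : Ob C} (t : chain m b) (s : chain a m) :
  ccomp (capp t s) = comp (ccomp t) (ccomp s).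
Proof.
  induction t as [|k c g t IH]; simpl.
  - now rewrite comp_id_l.
  - now rewrite IH, comp_assoc.
Qed.

Lemma proper_capp {a m b : Ob C} (t : chain m b) (s : chain a m) :
  all_nonidentity (capp t s) <-> all_nonidentity t /\ all_nonidentity s.
Proof. induction t; simpl; tauto. Qed.

End Chains.

Arguments capp {C a m b} t s.

Section Necessity.
Variable C : Category.
Hypothesis HM : Moebius C.

Lemma moebius_bounded_length {a b : Ob C} (f : Hom C a b) :
  ~ (forall k, exists p : chain a b,
        k <= clength p /\ all_nonidentity p /\ ccomp p = f).
Proof.
  intro Hlong.
  destruct (finite_set_bounded _ _ clength (HM a b f)) as [N HN].
  destruct (Hlong (S N)) as [p [Hl [Hp <-]]].
  enough (clength p <= N) by lia.
  apply HN. exists (clength p). apply proper_in_PDn; auto. lia.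
Qed.

(* (2): otherwise the powers of a proper decomposition of id_a would be
   proper decompositions of id_a of unbounded length. *)
Lemma moebius_identity_indecomposable (a : Ob C) (n : nat) (p : chain a a) :
  2 <= n -> ~ in_PDn n (idm a) p.
Proof.
  intros Hn [_ [[Hlen Hcc] [->|Hp]]]; [lia|].
  apply (moebius_bounded_length (idm a)). intro k.
  exists (Nat.iter k (capp p) p).
  induction k as [|k IH]; simpl; [repeat split; auto; lia|].
  destruct IH as [Hl [Hq Hc]].
  rewrite clength_capp, ccomp_capp, proper_capp, Hc, Hcc, comp_id_l.
  repeat split; auto. lia.
Qed.

(* (3): if fg = g with f, g non-identities, then (g, f, ..., f) are proper
   decompositions of g of unbounded length. *)
Lemma moebius_left_fixer (x y : Ob C) (f : Hom C y y) (g : Hom C x y) :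
  comp f g = g -> is_identity f.
Proof.
  intro Hfg.
  destruct (classic (is_identity g)) as [Hg|Hg].
  - revert f Hfg. pattern x, y, g. apply is_identity_ind; [|exact Hg].
    intros z f Hf. rewrite comp_id_r in Hf. subst f. reflexivity.
  - apply NNPP. intro Hf. apply (moebius_bounded_length g). intro k.
    exists (Nat.iter k (pcons f) (pcons g pnil)).
    induction k as [|k IH]; simpl.
    + rewrite comp_id_r. repeat split; auto.
    + destruct IH as [Hl [Hp Hc]]. rewrite Hc. repeat split; auto. lia.
Qed.

(* (4): dually, gf = g yields the proper decompositions (f, ..., f, g). *)
Lemma moebius_right_fixer (x y : Ob C) (f : Hom C x x) (g : Hom C x y) :
  comp g f = g -> is_identity f.
Proof.
  intro Hgf.
  destruct (classic (is_identity g)) as [Hg|Hg].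
  - revert f Hgf. pattern x, y, g. apply is_identity_ind; [|exact Hg].
    intros z f Hf. rewrite comp_id_l in Hf. subst f. reflexivity.
  - apply NNPP. intro Hf. apply (moebius_bounded_length g). intro k.
    exists (pcons g (Nat.iter k (pcons f) pnil)).
    induction k as [|k IH]; simpl.
    + rewrite comp_id_r. repeat split; auto.
    + destruct IH as [Hl [[_ Hp] Hc]]. simpl in Hc.
      rewrite comp_assoc, Hgf, Hc. repeat split; auto. simpl in Hl. lia.
Qed.

End Necessity.

Section Sufficiency.
Variable C : Category.
Hypothesis H1 : forall (a b : Ob C) (f : Hom C a b), finite_set (in_PDn 2 f).
Hypothesis H2 : forall (a : Ob C) (n : nat) (p : chain a a),
    2 <= n -> ~ in_PDn n (idm a) p.
Hypothesis H3 : forall (x y : Ob C) (f : Hom C y y) (g : Hom C x y),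
    comp f g = g -> is_identity f.

(* By (2), the composite of a non-empty proper chain is not an identity. *)
Lemma proper_composite_not_identity {m m' : Ob C} (q : chain m m') :
  all_nonidentity q -> 1 <= clength q -> ~ is_identity (ccomp q).
Proof.
  intros Hq Hl.
  destruct (Nat.eq_dec (clength q) 1) as [H|H].
  - destruct (chain_S _ q 0 H) as [k [g [q' [-> Hq']]]].
    destruct q'; [|discriminate]. simpl in *. rewrite comp_id_r. tauto.
  - remember (ccomp q) as h eqn:Hc. intro Hid. revert q Hq Hl H Hc.
    pattern m, m', h. apply is_identity_ind; [|exact Hid].
    intros z q Hq Hl H Hc. apply (H2 z (clength q) q); [lia|].
    rewrite Hc. apply proper_in_PDn; auto.
Qed.

Definition two {a m b : Ob C} (t : Hom C m b) (s : Hom C a m) : chain a b :=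
  pcons t (pcons s pnil).

Definition compose_top {a k b : Ob C} (g : Hom C k b) (c : chain a k)
  : chain a b :=
  match c in chain _ k0 return Hom C k0 b -> chain a b with
  | pnil => fun g => pcons g pnil
  | pcons t q => fun g => pcons (comp g t) q
  end g.

(* The cuts of (f_1, ..., f_n): the n - 1 two-chains
   (f_i ... f_1, f_n ... f_(i+1)). *)
Fixpoint cuts {a b : Ob C} (p : chain a b) : list (chain a b) :=
  match p with
  | pnil => []
  | pcons g q =>
      match q with pnil => [] | pcons _ _ => [two g (ccomp q)] end
      ++ map (compose_top g) (cuts q)
  end.

Definition bottom {a b : Ob C} (c : chain a b) : {k : Ob C & Hom C a k} :=
  match c with
  | pnil => existT _ a (idm a)
  | pcons _ q => existT _ _ (ccomp q)
  end.

Lemma bottom_compose_top {a k b : Ob C} (g : Hom C k b) (c : chain a k) :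
  bottom (compose_top g c) = bottom c.
Proof. revert g. destruct c; reflexivity. Qed.

Lemma cuts_length {a b : Ob C} (p : chain a b) :
  length (cuts p) = pred (clength p).
Proof.
  induction p as [|k b g q IH]; simpl; auto.
  rewrite length_app, length_map, IH. destruct q; simpl; lia.
Qed.

Lemma cuts_spec {a b : Ob C} (p : chain a b) (c : chain a b) :
  In c (cuts p) ->
  exists m (t : chain m b) (s : chain a m),
    1 <= clength t /\ 1 <= clength s /\ p = capp t s /\
    c = two (ccomp t) (ccomp s).
Proof.
  induction p as [|k b g q IH]; simpl; [contradiction|].
  intro Hc. apply in_app_or in Hc as [Hc|Hc].
  - destruct q as [|k' k'' g' q']; [contradiction|].
    destruct Hc as [<-|[]].
    exists _, (pcons g pnil), (pcons g' q'). simpl.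
    rewrite comp_id_r. repeat split; auto; lia.
  - apply in_map_iff in Hc as [c' [<- Hc']].
    destruct (IH c' Hc') as [m [t [s [Ht [Hs [-> ->]]]]]].
    exists m, (pcons g t), s. simpl. repeat split; auto; lia.
Qed.

Lemma cuts_in_PD2 {a b : Ob C} (p : chain a b) (c : chain a b) :
  all_nonidentity p -> In c (cuts p) -> in_PDn 2 (ccomp p) c.
Proof.
  intros Hp Hc.
  destruct (cuts_spec p c Hc) as [m [t [s [Ht [Hs [-> ->]]]]]].
  apply proper_capp in Hp as [Hpt Hps].
  repeat split; simpl; auto.
  - now rewrite comp_id_r, ccomp_capp.
  - right. repeat split; apply proper_composite_not_identity; auto.
Qed.

(* By (3), a non-identity morphism cannot map a morphism to itself. *)
Lemma left_factor_identity {a k m : Ob C} (t : Hom C k m) (s : Hom C a k) :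
  existT (fun x => Hom C a x) m (comp t s) = existT _ k s -> is_identity t.
Proof.
  intro E. assert (m = k) by exact (f_equal (@projT1 _ _) E). subst m.
  apply inj_pair2 in E. eapply H3; exact E.
Qed.

(* The lower piece of a proper chain q differs from the lower pieces of all
   cuts of q, since these are proper initial segments of q. *)
Lemma bottom_not_in_cuts {a k : Ob C} (q : chain a k) :
  all_nonidentity q -> ~ In (existT _ k (ccomp q)) (map bottom (cuts q)).
Proof.
  intros Hq Hin. apply in_map_iff in Hin as [c [Hbot Hc]].
  destruct (cuts_spec q c Hc) as [m [t [s [Ht [_ [-> ->]]]]]].
  simpl in Hbot. rewrite comp_id_r, ccomp_capp in Hbot.
  apply proper_capp in Hq as [Hpt _].
  apply (proper_composite_not_identity t Hpt Ht).
  exact (left_factor_identity _ _ (eq_sym Hbot)).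
Qed.

Lemma cuts_bottoms_NoDup {a b : Ob C} (p : chain a b) :
  all_nonidentity p -> NoDup (map bottom (cuts p)).
Proof.
  induction p as [|k b g q IH]; simpl; [constructor|].
  intros [Hg Hq]. rewrite map_app, map_map.
  rewrite (map_ext (fun c => bottom (compose_top g c)) bottom)
    by (intro; apply bottom_compose_top).
  destruct q as [|k' k'' g' q']; [constructor|].
  cbn [map app]. constructor; [|exact (IH Hq)].
  cbn [bottom two ccomp]. rewrite comp_id_r.
  exact (bottom_not_in_cuts (pcons g' q') Hq).
Qed.

Lemma proper_length_bound {a b : Ob C} (f : Hom C a b)
  (L : list (chain a b)) (HL : forall c, in_PDn 2 f c -> In c L)
  (p : chain a b) :
  all_nonidentity p -> ccomp p = f -> clength p <= S (length L).
Proof.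
  intros Hp Hf.
  assert (Hincl : length (cuts p) <= length L).
  { apply NoDup_incl_length.
    - exact (NoDup_map_inv _ _ (cuts_bottoms_NoDup p Hp)).
    - intros c Hc. apply HL. rewrite <- Hf. exact (cuts_in_PD2 p c Hp Hc). }
  rewrite cuts_length in Hincl. lia.
Qed.

Lemma PD1_singleton {a b : Ob C} (f : Hom C a b) (p : chain a b) :
  in_PDn 1 f p -> p = pcons f pnil.
Proof.
  intros [_ [[Hlen Hcc] _]].
  destruct (chain_S _ p 0 Hlen) as [k [g [q [-> Hq]]]].
  destruct q; [|discriminate]. simpl in Hcc.
  now rewrite comp_id_r in Hcc; subst.
Qed.

Lemma peel_top {a b : Ob C} (m : nat) (f : Hom C a b) (p : chain a b) :
  1 <= m -> in_PDn (S m) f p ->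
  exists k (g : Hom C k b) (q : chain a k),
    p = pcons g q /\ in_PDn m (ccomp q) q /\ in_PDn 2 f (two g (ccomp q)).
Proof.
  intros Hm [_ [[Hlen Hcc] [Hone|Hp]]]; [lia|].
  destruct (chain_S _ p m Hlen) as [k [g [q [-> Hq]]]].
  destruct Hp as [Hg Hqp]. exists k, g, q. repeat split; auto; simpl.
  - now rewrite comp_id_r.
  - right. repeat split; auto. apply proper_composite_not_identity; auto. lia.
Qed.

Definition top_split {a b : Ob C} (c : chain a b)
  : {k : Ob C & (Hom C k b * Hom C a k)%type} :=
  match c in chain _ b0 return {k : Ob C & (Hom C k b0 * Hom C a k)%type} with
  | pnil => existT _ a (idm a, idm a)
  | pcons g q => existT _ _ (g, ccomp q)
  end.

Lemma PDn_finite (n : nat) :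
  forall (a b : Ob C) (f : Hom C a b), finite_set (in_PDn n f).
Proof.
  induction n as [|m IH]; intros a b f.
  { exists []. intros p [Hn _]. lia. }
  destruct (Nat.eq_dec m 0) as [->|Hm].
  { exists [pcons f pnil]. intros p Hp. left. symmetry.
    exact (PD1_singleton f p Hp). }
  destruct (H1 a b f) as [L2 HL2].
  apply (finite_set_cover _ (map top_split L2)
           (fun i x => exists q : chain a (projT1 i),
                in_PDn m (snd (projT2 i)) q /\ x = pcons (fst (projT2 i)) q)).
  - intros [k [g s]]. destruct (IH a k s) as [l Hl].
    exists (map (pcons g) l). intros x [q [Hq ->]]. apply in_map. auto.
  - intros x Hx.
    destruct (peel_top m f x ltac:(lia) Hx) as [k [g [q [-> [Hq Htop]]]]].
    exists (top_split (two g (ccomp q))). split.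
    + apply in_map. auto.
    + simpl. rewrite comp_id_r. eauto.
Qed.

(* Conditions (1)-(3) imply the Möbius property: PD f is the union of the
   finite sets PD_n f for 1 <= n <= 1 + |PD_2 f|. *)
Lemma moebius_of_conditions : Moebius C.
Proof.
  intros a b f. destruct (H1 a b f) as [L2 HL2].
  apply (finite_set_cover _ (seq 1 (S (length L2))) (fun n => in_PDn n f)).
  { intro n. apply PDn_finite. }
  intros p [n Hp]. exists n. split; [|exact Hp]. apply in_seq.
  destruct Hp as [Hn [[Hlen Hcc] [->|Hprop]]]; [lia|].
  pose proof (proper_length_bound f L2 HL2 p Hprop Hcc). lia.
Qed.

End Sufficiency.

Theorem theorem7p1 (C : Category) :
  Moebius C <->
  ( (forall (a b : Ob C) (f : Hom C a b), finite_set (in_PDn 2 f))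
    /\ (forall (a : Ob C) (n : nat) (p : chain a a),
          2 <= n -> ~ in_PDn n (idm a) p)
    /\ (forall (x y : Ob C) (f : Hom C y y) (g : Hom C x y),
          comp f g = g -> is_identity f)
    /\ (forall (x y : Ob C) (f : Hom C x x) (g : Hom C x y),
          comp g f = g -> is_identity f) ).
Proof.
  split.
  - intro HM. repeat split.
    + intros a b f. destruct (HM a b f) as [l Hl].
      exists l. intros p Hp. apply Hl. exists 2. exact Hp.
    + exact (moebius_identity_indecomposable C HM).
    + exact (moebius_left_fixer C HM).
    + exact (moebius_right_fixer C HM).
  - intros [H1 [H2 [H3 _]]]. exact (moebius_of_conditions C H1 H2 H3).
Qed.
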